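(* Let $G=(V,E)$ be a connected, locally finite, undirected graph, fix $o\in V$ and $\beta>0$. The divisible sandpile $s$ with $s(x)=1$ for $x\ne o$ and $s(o)=1+\beta$ stabilizes on $G$ if and only if simple random walk on $G$ is transient.
   Context: $\Delta u(x)=\sum_{y\sim x}(u(y)-u(x))$. A divisible sandpile $s:V\to\mathbb{R}$ stabilizes if there exists $f:V\to[0,\infty)$ with $s+\Delta f\le 1$ pointwise. *)

From mathcomp Require Import all_boot all_order all_algebra.
From mathcomp Require Import reals.
Set Implicit Arguments. Unset Strict Implicit. Unset Printing Implicit Defensive.
Import Order.TTheory GRing.Theory Num.Theory.
Local Open Scope ring_scope.

(* A locally finite graph on an eqType V is given by its neighbour lists. *)
Definition simple_graph (V : eqType) (nbrs : V -> seq V) : Prop :=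
  (forall x, uniq (nbrs x)) /\
  (forall x, x \notin nbrs x) /\
  (forall x y, (y \in nbrs x) = (x \in nbrs y)).

Definition connected_graph (V : eqType) (nbrs : V -> seq V) : Prop :=
  forall x y, exists p : seq V,
    path (fun a b => b \in nbrs a) x p /\ last x p = y.

Definition laplacian (R : realType) (V : eqType) (nbrs : V -> seq V)
  (u : V -> R) (x : V) : R :=
  \sum_(y <- nbrs x) (u y - u x).

Definition stabilizes (R : realType) (V : eqType) (nbrs : V -> seq V)
  (s : V -> R) : Prop :=
  exists f : V -> R, (forall x, 0 <= f x) /\
    (forall x, s x + laplacian nbrs f x <= 1).

(* One step of simple random walk applied to a function:
   (P u)(x) = average of u over the neighbours of x
   (an isolated vertex keeps the walker in place). *)
Definition srw_avg (R : realType) (V : eqType) (nbrs : V -> seq V)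
  (u : V -> R) (x : V) : R :=
  if nbrs x is [::] then u x
  else (\sum_(y <- nbrs x) u y) / (size (nbrs x))%:R.

(* hit_prob nbrs o n x = P_x[ tau_o = n ], where tau_o = inf{k >= 0 : X_k = o}. *)
Fixpoint hit_prob (R : realType) (V : eqType) (nbrs : V -> seq V) (o : V)
  (n : nat) : V -> R :=
  match n with
  | 0 => fun x => if x == o then 1 else 0
  | k.+1 => fun x => if x == o then 0 else srw_avg nbrs (hit_prob R nbrs o k) x
  end.

(* P_o[ first return to o happens at time n+1 ]. *)
Definition first_return_prob (R : realType) (V : eqType) (nbrs : V -> seq V)
  (o : V) (n : nat) : R :=
  srw_avg nbrs (hit_prob R nbrs o n) o.

Definition srw_transient (R : realType) (V : eqType) (nbrs : V -> seq V)
  (o : V) : Prop :=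
  exists c : R, c < 1 /\
    forall N, \sum_(n < N) first_return_prob R nbrs o n <= c.

From mathcomp Require Import all_boot all_order all_algebra.
From mathcomp Require Import reals classical_sets.
From mathcomp Require Import lra.
Set Implicit Arguments. Unset Strict Implicit. Unset Printing Implicit Defensive.
Import Order.TTheory GRing.Theory Num.Theory.
Local Open Scope ring_scope.

(* Write h(x) = P_x[the walk ever hits o], the increasing limit of the
   probabilities P_x[tau_o < N].  Off o, h is harmonic, and the return
   probability to o is the average of h over the neighbours of o.

   If f >= 0 stabilizes s, then f is superharmonic off o and its average at o
   is below f(o) - beta/deg(o).  By induction on N, f(o) P_x[tau_o < N] <= f(x),
   so the return probability is at most 1 - beta/(deg(o) f(o)) < 1.

   Conversely, if the return probability is c < 1, then K h with
   K = beta / (deg(o) (1 - c)) stabilizes s: its Laplacian vanishes off o and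
   is at most deg(o) K (c - 1) = -beta at o. *)

Lemma sumr_const_seq (M : nmodType) (I : Type) (s : seq I) (a : M) :
  \sum_(i <- s) a = a *+ size s.
Proof. by elim: s => [|b s IH]; rewrite ?big_nil ?big_cons ?IH ?mulrS. Qed.

Lemma monotone_ex_all (T : eqType) (s : seq T) (P : nat -> T -> Prop) :
  (forall N M y, (N <= M)%N -> P N y -> P M y) ->
  (forall y, y \in s -> exists N, P N y) -> exists M, forall y, y \in s -> P M y.
Proof.
move=> P_up; elim: s => [|a s IH] ex_s; first by exists 0%N.
have [Na Pa] := ex_s a (mem_head _ _).
have [Ms Ps] : exists M, forall y, y \in s -> P M y.
  by apply: IH => y ys; apply: ex_s; rewrite inE ys orbT.
exists (maxn Na Ms) => y; rewrite inE => /orP [/eqP ->|ys].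
  by apply: P_up Pa; rewrite leq_maxl.
by apply: P_up (Ps y ys); rewrite leq_maxr.
Qed.

Section RandomWalkAverage.
Variables (R : realType) (V : eqType) (nbrs : V -> seq V).

Local Notation deg x := ((size (nbrs x))%:R : R).

Lemma srw_avg_sum (I : Type) (r : seq I) (F : I -> V -> R) x :
  srw_avg nbrs (fun y => \sum_(i <- r) F i y) x =
  \sum_(i <- r) srw_avg nbrs (F i) x.
Proof.
by rewrite /srw_avg; case: (nbrs x) => [//|a l]; rewrite exchange_big mulr_suml.
Qed.

Lemma srw_avgZ (a : R) u x :
  srw_avg nbrs (fun y => a * u y) x = a * srw_avg nbrs u x.
Proof. by rewrite /srw_avg; case: (nbrs x) => [//|b l]; rewrite -mulr_sumr mulrA. Qed.

Lemma srw_avg_cst (c : R) x : srw_avg nbrs (fun _ => c) x = c.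
Proof.
rewrite /srw_avg; case: (nbrs x) => [//|b l].
by rewrite sumr_const_seq -[c *+ _]mulr_natr -mulrA mulfV ?mulr1 // pnatr_eq0.
Qed.

Lemma srw_avgDr (a : R) u x :
  srw_avg nbrs (fun y => u y + a) x = srw_avg nbrs u x + a.
Proof.
rewrite -[in RHS](srw_avg_cst a x) /srw_avg; case: (nbrs x) => [//|b l].
by rewrite big_split mulrDl.
Qed.

Lemma ler_srw_avg (u v : V -> R) x :
  {in nbrs x, forall y, u y <= v y} -> u x <= v x ->
  srw_avg nbrs u x <= srw_avg nbrs v x.
Proof.
move=> le_nbrs le_x; rewrite /srw_avg; case E: (nbrs x) le_nbrs => [//|b l] le_nbrs.
rewrite ler_wpM2r ?invr_ge0 ?ler0n // big_seq_cond [X in _ <= X]big_seq_cond.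
by apply: ler_sum => y /andP [/le_nbrs].
Qed.

Lemma srw_avg_ge0 (u : V -> R) x : (forall y, 0 <= u y) -> 0 <= srw_avg nbrs u x.
Proof. by move=> u0; rewrite -(srw_avg_cst 0 x) ler_srw_avg. Qed.

Lemma laplacianE (u : V -> R) x :
  laplacian nbrs u x = deg x * (srw_avg nbrs u x - u x).
Proof.
rewrite /laplacian /srw_avg; case: (nbrs x) => [|b l]; first by rewrite big_nil mul0r.
rewrite sumrB sumr_const_seq mulrBr; congr (_ - _); last by rewrite mulr_natl.
by rewrite mulrC -mulrA mulVf ?mulr1 // pnatr_eq0.
Qed.

Lemma laplacian_le0P (u : V -> R) x :
  laplacian nbrs u x <= 0 <-> srw_avg nbrs u x <= u x.
Proof.
rewrite laplacianE /srw_avg; case: (nbrs x) => [|b l] /=; first by rewrite mul0r lexx.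
by rewrite pmulr_rle0 ?subr_le0.
Qed.

Lemma laplacian_le_oppP (u : V -> R) x (b : R) : (0 < size (nbrs x))%N ->
  laplacian nbrs u x <= - b <-> srw_avg nbrs u x + b / deg x <= u x.
Proof.
move=> deg_gt0; have d0 : 0 < deg x by rewrite ltr0n.
rewrite laplacianE -lerBrDl ler_pdivrMr // [_ * deg x]mulrC mulrBr.
by split; lra.
Qed.

End RandomWalkAverage.

Section Hitting.
Variables (R : realType) (V : eqType) (nbrs : V -> seq V) (o : V).

Local Notation deg x := ((size (nbrs x))%:R : R).

Definition hit_before (N : nat) (x : V) : R := \sum_(k < N) hit_prob R nbrs o k x.

Definition superharmonic_off (f : V -> R) : Prop :=
  forall x, x != o -> srw_avg nbrs f x <= f x.

Lemma hit_before0 x : hit_before 0 x = 0.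
Proof. by rewrite /hit_before big_ord0. Qed.

Lemma hit_beforeS N x :
  hit_before N.+1 x = if x == o then 1 else srw_avg nbrs (hit_before N) x.
Proof.
rewrite /hit_before big_ord_recl /=; case: (x == o); first by rewrite big1 ?addr0.
by rewrite add0r srw_avg_sum.
Qed.

Lemma sum_first_return_prob N :
  \sum_(n < N) first_return_prob R nbrs o n = srw_avg nbrs (hit_before N) o.
Proof. by rewrite srw_avg_sum. Qed.

Lemma hit_before_ge0 N x : 0 <= hit_before N x.
Proof.
elim: N x => [|N IH] x; first by rewrite hit_before0.
by rewrite hit_beforeS; case: (x == o); rewrite ?ler01 ?srw_avg_ge0.
Qed.

Lemma hit_before_le1 N x : hit_before N x <= 1.
Proof.
elim: N x => [|N IH] x; first by rewrite hit_before0 ler01.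
rewrite hit_beforeS; case: (x == o) => //.
by rewrite -(srw_avg_cst nbrs 1 x) ler_srw_avg.
Qed.

Lemma hit_before_leS N x : hit_before N x <= hit_before N.+1 x.
Proof.
elim: N x => [|N IH] x; first by rewrite hit_before0 hit_before_ge0.
by rewrite (hit_beforeS N.+1) hit_beforeS; case: (x == o); rewrite ?ler_srw_avg.
Qed.

Lemma hit_before_le N M x : (N <= M)%N -> hit_before N x <= hit_before M x.
Proof.
move/subnK <-; elim: (M - N)%N => [|k IH]; first by rewrite add0n.
by apply: le_trans IH _; rewrite addSn hit_before_leS.
Qed.

Lemma hit_before_le_superharmonic (f : V -> R) N x :
  (forall y, 0 <= f y) -> superharmonic_off f -> f o * hit_before N x <= f x.
Proof.
move=> f0 f_sup; elim: N x => [|N IH] x; first by rewrite hit_before0 mulr0.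
rewrite hit_beforeS; case: eqP => [->|/eqP xo]; first by rewrite mulr1.
by rewrite -srw_avgZ; apply: le_trans (f_sup x xo); rewrite ler_srw_avg.
Qed.

Lemma transient_of_superharmonic (f : V -> R) (b : R) : 0 < b ->
  (forall y, 0 <= f y) -> superharmonic_off f -> srw_avg nbrs f o + b <= f o ->
  srw_transient R nbrs o.
Proof.
move=> b0 f0 f_sup f_o.
have fo0 : 0 < f o by apply: lt_le_trans f_o; rewrite ltr_wpDl ?srw_avg_ge0.
exists (1 - b / f o); split; first by rewrite ltrBlDr ltrDl divr_gt0.
move=> N; rewrite sum_first_return_prob -(ler_pM2l fo0).
rewrite mulrBr mulr1 mulrCA mulfV ?gt_eqF // mulr1 lerBrDr -srw_avgZ.
have dom y : f o * hit_before N y <= f y by exact: hit_before_le_superharmonic.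
by apply: le_trans f_o; rewrite lerD2r ler_srw_avg.
Qed.

Definition hitting_prob (x : V) : R := sup (range (hit_before ^~ x)).

Lemma has_sup_hit_before x : has_sup (range (hit_before ^~ x)).
Proof.
split; first by exists (hit_before 0 x), 0%N.
by exists 1 => _ [N _ <-]; apply: hit_before_le1.
Qed.

Lemma hit_before_le_hitting_prob N x : hit_before N x <= hitting_prob x.
Proof. by apply: sup_upper_bound; [apply: has_sup_hit_before | exists N]. Qed.

Lemma hitting_prob_ge0 x : 0 <= hitting_prob x.
Proof. exact: le_trans (hit_before_ge0 0 x) (hit_before_le_hitting_prob 0 x). Qed.

Lemma hitting_prob_o : 1 <= hitting_prob o.
Proof. by have := hit_before_le_hitting_prob 1 o; rewrite hit_beforeS eqxx. Qed.

(* Monotone convergence through a finite average: one N works for x and all its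
   neighbours at once. *)
Lemma srw_avg_hitting_prob_approx e x : 0 < e ->
  exists M, srw_avg nbrs hitting_prob x <= srw_avg nbrs (hit_before M) x + e.
Proof.
move=> e0; have [||M HM] := @monotone_ex_all _ (x :: nbrs x)
  (fun N y => hitting_prob y <= hit_before N y + e).
- by move=> N M y NM; move/le_trans; apply; rewrite lerD2r hit_before_le.
- move=> y _; have [_ [N _ <-] lt_N] := sup_adherent e0 (has_sup_hit_before y).
  by exists N; rewrite -lerBlDr ltW.
exists M; rewrite -srw_avgDr ler_srw_avg ?HM ?mem_head // => y yx.
by rewrite HM // inE yx orbT.
Qed.

Lemma hitting_prob_superharmonic : superharmonic_off hitting_prob.
Proof.
move=> x xo; apply/ler_addgt0Pr => e e0.
have [M HM] := srw_avg_hitting_prob_approx x e0; apply: le_trans HM _.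
rewrite lerD2r; have := hit_before_le_hitting_prob M.+1 x.
by rewrite hit_beforeS (negbTE xo).
Qed.

Lemma srw_avg_hitting_prob_o (c : R) :
  (forall N, \sum_(n < N) first_return_prob R nbrs o n <= c) ->
  srw_avg nbrs hitting_prob o <= c.
Proof.
move=> le_c; apply/ler_addgt0Pr => e e0.
have [M HM] := srw_avg_hitting_prob_approx o e0; apply: le_trans HM _.
by rewrite lerD2r -sum_first_return_prob.
Qed.

Lemma superharmonic_of_transient (b : R) : srw_transient R nbrs o -> 0 < b ->
  exists f : V -> R, [/\ forall y, 0 <= f y, superharmonic_off f &
                         srw_avg nbrs f o + b <= f o].
Proof.
move=> [c [c1 le_c]] b0; have c0 : 0 < 1 - c by rewrite subr_gt0.
have h_o := srw_avg_hitting_prob_o le_c.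
pose K := b / (1 - c); have K0 : 0 < K by rewrite divr_gt0.
exists (fun x => K * hitting_prob x); split.
- by move=> y; rewrite mulr_ge0 ?(ltW K0) ?hitting_prob_ge0.
- by move=> x xo; rewrite srw_avgZ ler_wpM2l ?(ltW K0) ?hitting_prob_superharmonic.
have bK : b = K * (1 - c) by rewrite /K mulfVK ?gt_eqF.
rewrite srw_avgZ bK -mulrDr ler_wpM2l ?(ltW K0) //.
by apply: le_trans hitting_prob_o; lra.
Qed.

Lemma transient_size_nbrs : srw_transient R nbrs o -> (0 < size (nbrs o))%N.
Proof.
move=> [c [c1 le_c]]; move: (le_c 1%N).
rewrite sum_first_return_prob /srw_avg; case: (nbrs o) => [|//] /=.
by rewrite hit_beforeS eqxx => /(lt_le_trans c1); rewrite ltxx.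
Qed.

Lemma stabilizes_size_nbrs (b : R) : 0 < b ->
  stabilizes nbrs (fun x => if x == o then 1 + b else 1) -> (0 < size (nbrs o))%N.
Proof.
move=> b0 [f [_ /(_ o)]]; rewrite eqxx /laplacian; case: (nbrs o) => [|//].
by rewrite big_nil addr0 gerDl leNgt b0.
Qed.

Lemma stabilizesP (b : R) : (0 < size (nbrs o))%N ->
  stabilizes nbrs (fun x => if x == o then 1 + b else 1) <->
  exists f : V -> R, [/\ forall y, 0 <= f y, superharmonic_off f &
                         srw_avg nbrs f o + b / deg o <= f o].
Proof.
move=> deg_gt0; split.
- move=> [f [f0 f_s]]; exists f; split=> // [x xo|].
    by apply/laplacian_le0P; move: (f_s x); rewrite (negbTE xo); lra.
  by apply/laplacian_le_oppP => //; move: (f_s o); rewrite eqxx; lra.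
- move=> [f [f0 f_sup f_o]]; exists f; split=> // x.
  case: eqP => [->|/eqP xo].
    by move/(laplacian_le_oppP _ _ deg_gt0): f_o; lra.
  by move/laplacian_le0P: (f_sup x xo); lra.
Qed.

End Hitting.

Theorem lemma2p12 (R : realType) (V : eqType) (nbrs : V -> seq V)
  (o : V) (beta : R) :
  simple_graph nbrs -> connected_graph nbrs -> 0 < beta ->
  (stabilizes nbrs (fun x => if x == o then 1 + beta else 1)
   <-> srw_transient R nbrs o).
Proof.
move=> _ _ beta0; split => [st | tr].
- have deg_gt0 := stabilizes_size_nbrs beta0 st.
  have [f [f0 f_sup f_o]] := (stabilizesP _ deg_gt0).1 st.
  by apply: transient_of_superharmonic f_o; rewrite ?divr_gt0 ?ltr0n.
- have deg_gt0 := transient_size_nbrs tr.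
  apply/(stabilizesP _ deg_gt0)/superharmonic_of_transient => //.
  by rewrite divr_gt0 ?ltr0n.
Qed.
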